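(* Let $I$ be a set with decidable equality, and let $(X_\alpha)_{\alpha\in I}$ be a family of locales each of which is positive and overt. Then the product locale $\prod_{\alpha\in I}X_\alpha$ is positive and overt.
   Context: Work constructively: neither excluded middle nor any form of choice is assumed. Frames and locales: a frame is a poset with finite meets and arbitrary joins with $a\wedge\bigvee_i b_i=\bigvee_i a\wedge b_i$; locales form the opposite category. $\mathcal{O}X$ denotes the frame of a locale $X$, and $\Omega$ is the initial frame of truth values, $\mathcal{O}1=\Omega$. The unique map ${!}\colon X\to1$ has ${!}^*(p)=\bigvee\{1\mid p=\top\}$. Positivity and overtness: $u\in\mathcal{O}X$ is positive if whenever $u\le\bigvee S$ the set $S$ is inhabited. $X$ is positive if $1$ is positive. $X$ is overt if ${!}^*\colon\Omega\to\mathcal{O}X$ has a left adjoint. Decidable equality: a set $I$ has decidable equality if $\forall \alpha,\beta\in I.\ \alpha=\beta\vee\alpha\ne\beta$. Products: the product of locales is the coproduct of frames. $\mathcal{O}(\prod_\alpha X_\alpha)$ is presented by generators $\iota_\alpha(u)$ for $\alpha\in I$ and $u\in\mathcal{O}X_\alpha$, with relations making each $\iota_\alpha$ a frame homomorphism. *)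

Record Frame : Type := {
  carrier :> Type;
  le : carrier -> carrier -> Prop;
  le_refl : forall a, le a a;
  le_trans : forall a b c, le a b -> le b c -> le a c;
  le_antisym : forall a b, le a b -> le b a -> a = b;
  top : carrier;
  top_spec : forall a, le a top;
  meet : carrier -> carrier -> carrier;
  meet_spec : forall a b c, le c (meet a b) <-> (le c a /\ le c b);
  join : (carrier -> Prop) -> carrier;
  join_spec : forall (S : carrier -> Prop) c,
      le (join S) c <-> (forall s, S s -> le s c);
  distrib : forall a (S : carrier -> Prop),
      meet a (join S) = join (fun x => exists b, S b /\ x = meet a b)
}.

Arguments le {f} _ _.
Arguments top {f}.
Arguments meet {f} _ _.
Arguments join {f} _.

Definition img {A B : Type} (f : A -> B) (S : A -> Prop) : B -> Prop :=
  fun y => exists s, S s /\ y = f s.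

Definition frame_hom (A B : Frame) (f : A -> B) : Prop :=
  f top = top /\
  (forall a b, f (meet a b) = meet (f a) (f b)) /\
  (forall S : A -> Prop, f (join S) = join (img f S)).

(* [P] with injections [iota] is a coproduct of the frames [X alpha]
   (i.e. O(prod_alpha X_alpha) for the product locale), characterized by
   its universal property in the category of frames. *)
Definition is_frame_coproduct {I : Type} (X : I -> Frame) (P : Frame)
  (iota : forall alpha, X alpha -> P) : Prop :=
  (forall alpha, frame_hom (X alpha) P (iota alpha)) /\
  forall (F : Frame) (f : forall alpha, X alpha -> F),
    (forall alpha, frame_hom (X alpha) F (f alpha)) ->
    (exists g : P -> F, frame_hom P F g /\
        forall alpha x, g (iota alpha x) = f alpha x) /\
    (forall g g' : P -> F,
        frame_hom P F g -> frame_hom P F g' ->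
        (forall alpha x, g (iota alpha x) = f alpha x) ->
        (forall alpha x, g' (iota alpha x) = f alpha x) ->
        forall y, g y = g' y).

Definition positive_elt {X : Frame} (u : X) : Prop :=
  forall S : X -> Prop, le u (join S) -> exists s, S s.

Definition positive_locale (X : Frame) : Prop := positive_elt (@top X).

(* !^* : Omega -> O X, !^*(p) = \/ {1 | p = T}, Omega = Prop ordered by implication. *)
Definition shriek_star (X : Frame) (p : Prop) : X :=
  join (fun x : X => x = top /\ p).

(* X is overt: !^* has a left adjoint  exists_X -| !^*. *)
Definition overt (X : Frame) : Prop :=
  exists ex : X -> Prop,
    forall (u : X) (p : Prop), (ex u -> p) <-> le u (shriek_star X p).

Definition dec_eq (I : Type) : Prop := forall a b : I, a = b \/ a <> b.

(* Overtness of a locale is equivalent to "local positivity": every open is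
   the join of the positive opens below it ([overt_locally_positive],
   [locally_positive_overt]).  Let P = O(prod_a X_a), generated by the
   injections iota_a.  A basic open is a finite meet of generators
   iota_a(s); its coordinate box (an element of prod_a O(X_a)) records its
   component at every index.  Call it a positive basic open when every
   coordinate of the box is positive.  Two facts give the theorem.

   1. Positive basic opens are positive.  We build the frame of coverage-closed
      down-sets of boxes (a concrete presentation of the coproduct), map P into
      it by the universal property, and show by induction on the closure that
      if the closure of a set T contains a box with positive coordinates then
      T is inhabited; this uses overtness of each factor and decidable
      equality of I.
   2. Every open of P is covered by positive basic opens.  The covered opens
      form a subframe containing every generator (overtness of the factors
      again), and a subframe containing the generators of a coproduct is
      everything ([coproduct_generated]).

   Hence 1 is positive and P is locally positive, i.e. overt. *)

From Stdlib Require Import ProofIrrelevance FunctionalExtensionality PropExtensionality Eqdep_dec.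

Section FrameFacts.
Context {F : Frame}.

Lemma meet_lb_l (a b : F) : le (meet a b) a.
Proof. exact (proj1 (proj1 (meet_spec F a b _) (le_refl F _))). Qed.

Lemma meet_lb_r (a b : F) : le (meet a b) b.
Proof. exact (proj2 (proj1 (meet_spec F a b _) (le_refl F _))). Qed.

Lemma meet_glb (a b c : F) : le c a -> le c b -> le c (meet a b).
Proof. intros; apply meet_spec; auto. Qed.

Lemma join_ub (S : F -> Prop) (s : F) : S s -> le s (join S).
Proof. exact (fun Hs => proj1 (join_spec F S _) (le_refl F _) s Hs). Qed.

Lemma join_lub (S : F -> Prop) (c : F) : (forall s, S s -> le s c) -> le (join S) c.
Proof. apply join_spec. Qed.

Lemma join_ext (S T : F -> Prop) : (forall x, S x <-> T x) -> join S = join T.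
Proof.
  intros H; apply le_antisym; apply join_lub; intros s Hs; apply join_ub, H; exact Hs.
Qed.

Lemma join_singleton (s : F) : join (fun y => y = s) = s.
Proof. apply le_antisym; [apply join_lub; intros y ->; apply le_refl|apply join_ub; reflexivity]. Qed.

Lemma meet_comm (a b : F) : meet a b = meet b a.
Proof. apply le_antisym; apply meet_glb; auto using meet_lb_l, meet_lb_r. Qed.

Lemma meet_mono (a b c d : F) : le a c -> le b d -> le (meet a b) (meet c d).
Proof.
  intros Hac Hbd. apply meet_glb.
  - eapply le_trans; [apply meet_lb_l|exact Hac].
  - eapply le_trans; [apply meet_lb_r|exact Hbd].
Qed.

Lemma meet_assoc (a b c : F) : meet a (meet b c) = meet (meet a b) c.
Proof.
  apply le_antisym; repeat apply meet_glb;
    eauto using le_trans, meet_lb_l, meet_lb_r, le_refl.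
Qed.

Lemma meet_eq_l (a b : F) : le a b -> meet a b = a.
Proof. intros H. apply le_antisym; [apply meet_lb_l|apply meet_glb; auto using le_refl]. Qed.

Lemma meet_top (a : F) : meet a top = a.
Proof. apply meet_eq_l, top_spec. Qed.

Lemma top_meet (a : F) : meet top a = a.
Proof. rewrite meet_comm; apply meet_top. Qed.

Lemma positive_mono (u v : F) : positive_elt u -> le u v -> positive_elt v.
Proof. intros Hu Huv S HS. apply Hu. eapply le_trans; eauto. Qed.

End FrameFacts.

Lemma hom_mono {A B : Frame} (f : A -> B) :
  frame_hom A B f -> forall a b, le a b -> le (f a) (f b).
Proof.
  intros [_ [Hmeet _]] a b Hab.
  rewrite <- (meet_eq_l a b Hab), Hmeet. apply meet_lb_r.
Qed.

Lemma hom_id (A : Frame) : frame_hom A A (fun x => x).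
Proof.
  split; [reflexivity|split; [reflexivity|]]. intros S. apply join_ext.
  intros y; split; [intros Hy; exists y; auto|intros [s [Hs ->]]; exact Hs].
Qed.

Lemma hom_comp {A B C : Frame} (f : A -> B) (g : B -> C) :
  frame_hom A B f -> frame_hom B C g -> frame_hom A C (fun x => g (f x)).
Proof.
  intros [Hft [Hfm Hfj]] [Hgt [Hgm Hgj]]. split; [|split].
  - rewrite Hft; exact Hgt.
  - intros a b. rewrite Hfm; apply Hgm.
  - intros S. rewrite Hfj, Hgj. apply join_ext. intros y; split.
    + intros [z [[s [Hs ->]] ->]]. exists s; auto.
    + intros [s [Hs ->]]. exists (f s). split; [exists s; auto|reflexivity].
Qed.

(* Overtness as local positivity: every open is covered by the positive opens
   below it.  The left adjoint of !^* is then "u is positive". *)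
Definition locally_positive (X : Frame) : Prop :=
  forall u : X, le u (join (fun v => le v u /\ positive_elt v)).

Lemma overt_locally_positive (X : Frame) : overt X -> locally_positive X.
Proof.
  intros [ex Hex] u.
  assert (ex_positive : forall v : X, ex v -> positive_elt v).
  { intros v Hv S HS. apply (proj2 (Hex v (exists s, S s))); [|exact Hv].
    eapply le_trans; [exact HS|]. apply join_lub. intros s Hs.
    eapply le_trans; [apply top_spec|]. apply join_ub. eauto. }
  assert (Hu : le u (meet u (shriek_star X (ex u)))).
  { apply meet_glb; [apply le_refl|]. apply Hex; auto. }
  eapply le_trans; [exact Hu|]. unfold shriek_star. rewrite distrib.
  apply join_lub. intros x [t [[-> Hp] ->]]. rewrite meet_top.
  apply join_ub. split; [apply le_refl|auto].
Qed.

Lemma locally_positive_overt (X : Frame) : locally_positive X -> overt X.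
Proof.
  intros hX. exists (@positive_elt X). intros u p; split.
  - intros H. eapply le_trans; [apply hX|]. apply join_lub. intros v [Hvu Hv].
    eapply le_trans; [apply top_spec|]. apply join_ub. split; [reflexivity|].
    apply H. eapply positive_mono; eauto.
  - intros H Hu. destruct (Hu _ H) as [x [_ Hp]]. exact Hp.
Qed.

Lemma positive_cover_member (X : Frame) (u : X) (T : X -> Prop) :
  locally_positive X -> positive_elt u -> le u (join T) -> exists t, T t /\ positive_elt t.
Proof.
  intros hX Hu HT.
  assert (H : le u (join (fun v => exists t, T t /\ le v t /\ positive_elt v))).
  { eapply le_trans; [exact HT|]. apply join_lub. intros t Ht.
    eapply le_trans; [apply hX|]. apply join_lub. intros v [Hvt Hv].
    apply join_ub. eauto. }
  destruct (Hu _ H) as [v [t [Ht [Hvt Hv]]]]. eauto using positive_mono.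
Qed.

Lemma hom_positive_cover {X F : Frame} (f : X -> F) :
  locally_positive X -> frame_hom X F f ->
  forall x, le (f x) (join (img f (fun r => le r x /\ positive_elt r))).
Proof. intros hX Hf x. rewrite <- (proj2 (proj2 Hf)). apply (hom_mono f Hf), hX. Qed.

Definition subframe_closed {F : Frame} (D : F -> Prop) : Prop :=
  D top /\ (forall a b, D a -> D b -> D (meet a b)) /\
  (forall S, (forall s, S s -> D s) -> D (join S)).

Section SubFrame.
Context {F : Frame} (D : F -> Prop) (HD : subframe_closed D).

Lemma sub_eq (u v : {x : F | D x}) : proj1_sig u = proj1_sig v -> u = v.
Proof. destruct u, v; simpl; intros ->. f_equal. apply proof_irrelevance. Qed.

Lemma img_proj_in (S : {x : F | D x} -> Prop) y : img (@proj1_sig _ _) S y -> D y.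
Proof. intros [s [_ ->]]. exact (proj2_sig s). Qed.

Definition SubFrame : Frame.
Proof.
  refine {| carrier := {x : F | D x};
            le u v := le (proj1_sig u) (proj1_sig v);
            top := exist _ top (proj1 HD);
            meet u v := exist _ (meet (proj1_sig u) (proj1_sig v))
                          (proj1 (proj2 HD) _ _ (proj2_sig u) (proj2_sig v));
            join S := exist _ (join (img (@proj1_sig _ _) S))
                        (proj2 (proj2 HD) _ (img_proj_in S)) |}.
  - intros; apply le_refl.
  - intros; eapply le_trans; eauto.
  - intros u v H1 H2. apply sub_eq, le_antisym; auto.
  - intros; apply top_spec.
  - intros; apply meet_spec.
  - intros S c; simpl. rewrite join_spec. split.
    + intros H s Hs. apply H. exists s; auto.
    + intros H s [x [Hx ->]]. auto.
  - intros a S. apply sub_eq. simpl. rewrite distrib. apply join_ext. intros x; split.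
    + intros [b [[s [Hs ->]] ->]].
      exists (exist _ (meet (proj1_sig a) (proj1_sig s))
                (proj1 (proj2 HD) _ _ (proj2_sig a) (proj2_sig s))).
      split; [exists s; auto|reflexivity].
    + intros [y [[b [Hb ->]] ->]]. exists (proj1_sig b). split; [exists b; auto|reflexivity].
Defined.

Lemma sub_incl_hom : frame_hom SubFrame F (@proj1_sig _ _).
Proof. split; [reflexivity|split; reflexivity]. Qed.

Lemma corestrict_hom {A : Frame} (f : A -> F) (Hf : frame_hom A F f)
  (HfD : forall x, D (f x)) : frame_hom A SubFrame (fun x => exist _ (f x) (HfD x)).
Proof.
  destruct Hf as [Ht [Hm Hj]]. split; [|split].
  - apply sub_eq, Ht.
  - intros x y. apply sub_eq, Hm.
  - intros S. apply sub_eq. simpl. rewrite Hj. apply join_ext. intros y; split.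
    + intros [s [Hs ->]]. exists (exist _ (f s) (HfD s)). split; [exists s; auto|reflexivity].
    + intros [z [[s [Hs ->]] ->]]. exists s; auto.
Qed.

End SubFrame.

(* The induction principle of a coproduct: the inclusion of the generated
   subframe composed with the mediating map agrees with the identity on the
   generators, hence is the identity by uniqueness. *)
Lemma coproduct_generated {I : Type} (X : I -> Frame) (P : Frame)
  (iota : forall a, X a -> P) (hP : is_frame_coproduct X P iota)
  (D : P -> Prop) (HD : subframe_closed D) :
  (forall a x, D (iota a x)) -> forall y, D y.
Proof.
  intros Hgen y. destruct hP as [Hiota Huniv].
  destruct (Huniv (SubFrame D HD) (fun a x => exist _ (iota a x) (Hgen a x))
              (fun a => corestrict_hom D HD (iota a) (Hiota a) (Hgen a)))
    as [[g [Hg Hgi]] _].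
  assert (Hgy : proj1_sig (g y) = y).
  { apply (proj2 (Huniv P iota Hiota) (fun y => proj1_sig (g y)) (fun y => y)).
    - exact (hom_comp g _ Hg (sub_incl_hom D HD)).
    - apply hom_id.
    - intros a x. rewrite Hgi. reflexivity.
    - reflexivity. }
  rewrite <- Hgy. exact (proj2_sig (g y)).
Qed.

Section Covering.
Context {F : Frame} (G : F -> Prop).

Definition covered (u : F) : Prop := le u (join (fun v => le v u /\ G v)).

Lemma covered_of_G (v : F) : G v -> covered v.
Proof. intros Hv. apply join_ub. split; [apply le_refl|exact Hv]. Qed.

Lemma covered_cover (u : F) (Z : F -> Prop) :
  le u (join Z) -> (forall z, Z z -> covered z /\ le z u) -> covered u.
Proof.
  intros Hu HZ. eapply le_trans; [exact Hu|]. apply join_lub. intros z Hz.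
  destruct (HZ z Hz) as [Cz Hzu]. eapply le_trans; [exact Cz|]. apply join_lub.
  intros v [Hvz Gv]. apply join_ub. split; [eapply le_trans; eauto|exact Gv].
Qed.

Lemma covered_join (S : F -> Prop) : (forall s, S s -> covered s) -> covered (join S).
Proof.
  intros H. apply (covered_cover _ S (le_refl F _)). intros z Hz.
  split; [auto|apply join_ub; exact Hz].
Qed.

Lemma covered_meet_l (a b : F) :
  covered a -> (forall z, G z -> le z a -> covered (meet z b)) -> covered (meet a b).
Proof.
  intros Ha H.
  apply (covered_cover _ (fun x => exists z, (le z a /\ G z) /\ x = meet b z)).
  - rewrite meet_comm. eapply le_trans; [apply meet_mono; [apply le_refl|exact Ha]|].
    rewrite distrib. apply le_refl.
  - intros x [z [[Hza Gz] ->]]. rewrite meet_comm. split.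
    + apply H; assumption.
    + apply meet_mono; [exact Hza|apply le_refl].
Qed.

Lemma covered_subframe :
  G top -> (forall z w, G z -> G w -> covered (meet z w)) -> subframe_closed covered.
Proof.
  intros Gtop Gmeet. split; [apply covered_of_G, Gtop|split; [|apply covered_join]].
  intros a b Ha Hb. apply covered_meet_l; [exact Ha|]. intros z Gz _.
  rewrite meet_comm. apply covered_meet_l; [exact Hb|]. intros w Gw _.
  rewrite meet_comm. apply Gmeet; assumption.
Qed.

Lemma covered_mono (G' : F -> Prop) (u : F) :
  (forall v, G v -> G' v) -> covered u -> le u (join (fun v => le v u /\ G' v)).
Proof.
  intros HG Hu. eapply le_trans; [exact Hu|]. apply join_lub. intros v [Hvu Gv].
  apply join_ub. auto.
Qed.

End Covering.

Section Product.
Context {I : Type} (X : I -> Frame).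

Definition box : Type := forall a, X a.
Definition box_le (b c : box) : Prop := forall a, le (b a) (c a).
Definition box_meet (b c : box) : box := fun a => meet (b a) (c a).

(* The coverage presenting the product: a box b is covered by the family of
   boxes c <= b with c_a <= s (s in S) whenever b_a <= \/ S.  Closed sets are
   the down-sets saturated for this coverage. *)
Definition down_closed (D : box -> Prop) : Prop :=
  forall b c, box_le b c -> D c -> D b.

Definition closed (D : box -> Prop) : Prop :=
  down_closed D /\
  forall b a (S : X a -> Prop), le (b a) (join S) ->
    (forall s c, S s -> box_le c b -> le (c a) s -> D c) -> D b.

Definition closure (A : box -> Prop) (b : box) : Prop :=
  forall C, closed C -> (forall x, A x -> C x) -> C b.

Lemma closure_closed (A : box -> Prop) : closed (closure A).
Proof.
  split.
  - intros b c Hbc Hc C HC HA. apply (proj1 HC b c Hbc). apply Hc; auto.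
  - intros b a S Hb Hcov C HC HA. apply (proj2 HC b a S Hb).
    intros s c Hs Hcb Hca. exact (Hcov s c Hs Hcb Hca C HC HA).
Qed.

Lemma closure_incl (A : box -> Prop) (b : box) : A b -> closure A b.
Proof. intros Hb C _ HA; auto. Qed.

Lemma closure_min (A C : box -> Prop) :
  closed C -> (forall x, A x -> C x) -> forall x, closure A x -> C x.
Proof. intros HC HA x Hx. apply Hx; auto. Qed.

Lemma closure_mono (A B : box -> Prop) :
  (forall x, A x -> B x) -> forall x, closure A x -> closure B x.
Proof. intros H. apply closure_min; [apply closure_closed|]. intros; apply closure_incl; auto. Qed.

(* Localization: closure commutes with restriction to a down-closed set E.
   This is what makes meets distribute over closures of unions. *)
Lemma closure_local (A E C : box -> Prop) :
  down_closed A -> down_closed E -> closed C ->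
  (forall x, A x -> E x -> C x) -> forall x, closure A x -> E x -> C x.
Proof.
  intros HA HE HC Hbase x Hx Ex.
  assert (HL : closed (fun b => forall b', box_le b' b -> E b' -> C b')).
  { split.
    - intros b c Hbc Hc b' Hb' Eb'. apply Hc; [|exact Eb'].
      intros i; eapply le_trans; eauto.
    - intros b a S Hb Hcov b' Hb' Eb'. apply (proj2 HC b' a S).
      + eapply le_trans; [apply Hb'|exact Hb].
      + intros s c Hs Hcb' Hca. apply (Hcov s c Hs).
        * intros i; eapply le_trans; eauto.
        * exact Hca.
        * intros i; apply le_refl.
        * exact (HE c b' Hcb' Eb'). }
  apply (Hx _ HL); [|intros i; apply le_refl|exact Ex].
  intros y Ay b' Hb' Eb'. apply Hbase; [exact (HA b' y Hb' Ay)|exact Eb'].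
Qed.

Lemma closure_inter (A B : box -> Prop) :
  down_closed A -> down_closed B ->
  forall x, closure A x -> closure B x -> closure (fun y => A y /\ B y) x.
Proof.
  intros HA HB. apply (closure_local A (closure B)); [exact HA|apply closure_closed|apply closure_closed|].
  intros x Ax Bx. revert x Bx Ax.
  apply (closure_local B A); [exact HB|exact HA|apply closure_closed|].
  intros y By Ay. apply closure_incl; auto.
Qed.

Definition Ideal : Type := {D : box -> Prop | closed D}.

Lemma ideal_eq (D E : Ideal) : (forall b, proj1_sig D b <-> proj1_sig E b) -> D = E.
Proof.
  destruct D as [D HD], E as [E HE]; simpl; intros H.
  assert (D = E) as <-.
  { apply functional_extensionality; intros b; apply propositional_extensionality; auto. }
  f_equal. apply proof_irrelevance.
Qed.

Lemma closed_full : closed (fun _ => True).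
Proof. split; [intros b c _ _|intros b a S _ _]; exact Logic.I. Qed.

Lemma closed_inter (D E : box -> Prop) : closed D -> closed E -> closed (fun b => D b /\ E b).
Proof.
  intros [HDd HDc] [HEd HEc]. split.
  - intros b c Hbc [Hd He]. split; eauto.
  - intros b a S Hb Hcov. split; [apply (HDc b a S)|apply (HEc b a S)]; auto;
      intros s c Hs Hcb Hca; apply (Hcov s c Hs Hcb Hca).
Qed.

Definition ideal_union (S : Ideal -> Prop) (b : box) : Prop :=
  exists D, S D /\ proj1_sig D b.

Lemma ideal_union_down (S : Ideal -> Prop) : down_closed (ideal_union S).
Proof. intros b c Hbc [D [HD Hc]]. exists D. split; [exact HD|exact (proj1 (proj2_sig D) b c Hbc Hc)]. Qed.

Definition ideal_meet (D E : Ideal) : Ideal :=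
  exist _ _ (closed_inter _ _ (proj2_sig D) (proj2_sig E)).

Definition CoverageFrame : Frame.
Proof.
  refine {| carrier := Ideal;
            le D E := forall b, proj1_sig D b -> proj1_sig E b;
            top := exist _ _ closed_full;
            meet := ideal_meet;
            join S := exist _ (closure (ideal_union S)) (closure_closed _) |}.
  - auto.
  - auto.
  - intros D E H1 H2. apply ideal_eq. split; auto.
  - simpl; auto.
  - intros D E C. simpl. split.
    + intros H; split; intros b Hb; apply H; auto.
    + intros [H1 H2] b Hb; auto.
  - intros S C. simpl. split.
    + intros H D HD b Hb. apply H, closure_incl. exists D; auto.
    + intros H. apply closure_min; [exact (proj2_sig C)|].
      intros b [D [HD Hb]]. exact (H D HD b Hb).
  - intros D S. apply ideal_eq. intros b. simpl. split.
    + intros [HDb Hb]. revert b Hb HDb.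
      apply closure_local; [apply ideal_union_down|exact (proj1 (proj2_sig D))|apply closure_closed|].
      intros x [E [HE Hx]] HDx. apply closure_incl. exists (ideal_meet D E).
      split; [exists E; auto|split; assumption].
    + intros Hb. split.
      * revert b Hb. apply closure_min; [exact (proj2_sig D)|].
        intros x [E [[E' [_ ->]] Hx]]. exact (proj1 Hx).
      * revert b Hb. apply closure_mono.
        intros x [E [[E' [HE' ->]] Hx]]. exists E'. split; [exact HE'|exact (proj2 Hx)].
Defined.

Definition gen (a : I) (x : X a) : CoverageFrame :=
  exist _ (closure (fun b => le (b a) x)) (closure_closed _).

Lemma coordinate_down (a : I) (x : X a) : down_closed (fun b => le (b a) x).
Proof. intros b c Hbc Hc. eapply le_trans; eauto. Qed.

Lemma gen_hom (a : I) : frame_hom (X a) CoverageFrame (gen a).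
Proof.
  split; [|split].
  - apply ideal_eq. intros b; simpl; split; [auto|intros _; apply closure_incl, top_spec].
  - intros x y. apply ideal_eq. intros b; simpl; split.
    + intros H. split; revert b H; apply closure_mono; intros c Hc;
        (eapply le_trans; [exact Hc|]); [apply meet_lb_l|apply meet_lb_r].
    + intros [Hx Hy].
      generalize (closure_inter _ _ (coordinate_down a x) (coordinate_down a y) b Hx Hy).
      apply closure_mono. intros c [Hcx Hcy]. apply meet_glb; assumption.
  - intros S. apply ideal_eq. intros b; simpl; split.
    + revert b. apply closure_min; [apply closure_closed|]. intros b Hb.
      apply (proj2 (closure_closed _) b a S Hb). intros s c Hs _ Hcs.
      apply closure_incl. exists (gen a s). split; [exists s; auto|apply closure_incl, Hcs].
    + revert b. apply closure_min; [apply closure_closed|].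
      intros b [D [[s [Hs ->]] Hb]]. revert b Hb. apply closure_mono. intros c Hc.
      eapply le_trans; [exact Hc|apply join_ub, Hs].
Qed.

Hypothesis hI : dec_eq I.

(* The box equal to s at index a and to 1 elsewhere.  As equality on I is only
   decidable in Prop, it is defined as a join rather than by case analysis. *)
Definition cylinder (a : I) (s : X a) : box :=
  fun i => join (fun y => (exists e : a = i, y = eq_rect a (fun j => carrier (X j)) s i e)
                       \/ (a <> i /\ y = top)).

Lemma cylinder_at (a : I) (s : X a) : cylinder a s a = s.
Proof.
  unfold cylinder. transitivity (join (fun y : X a => y = s)); [|apply join_singleton].
  apply join_ext. intros y; split.
  - intros [[e He]|[Hne _]]; [|congruence].
    rewrite (eq_proofs_unicity_on (hI a) e eq_refl) in He. exact He.
  - intros ->. left. exists eq_refl. reflexivity.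
Qed.

Lemma cylinder_off (a : I) (s : X a) (i : I) : a <> i -> cylinder a s i = top.
Proof.
  intros Hne. unfold cylinder. transitivity (join (fun y : X i => y = top)); [|apply join_singleton].
  apply join_ext. intros y; split.
  - intros [[e _]|[_ Hy]]; [congruence|exact Hy].
  - intros ->. right. auto.
Qed.

Hypothesis hov : forall a, locally_positive (X a).

(* If the closure of T contains a box all of whose coordinates are positive,
   then T is inhabited: a positive box cannot be covered by nothing.  This is
   where overtness of the factors enters. *)
Lemma closure_positive (T : box -> Prop) (b : box) :
  (forall a, positive_elt (b a)) -> closure T b -> exists t, T t.
Proof.
  intros Hb Hcl.
  refine (closure_min T (fun b => (forall a, positive_elt (b a)) -> exists t, T t) _ _ b Hcl Hb).
  - split.
    + intros c d Hcd Hd Hc. apply Hd. intros a. exact (positive_mono _ _ (Hc a) (Hcd a)).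
    + intros c a S Hc Hcov Hpos.
      assert (Hcover : le (c a) (join (fun x => exists s, S s /\ x = meet (c a) s))).
      { rewrite <- distrib. apply meet_glb; [apply le_refl|exact Hc]. }
      destruct (positive_cover_member _ _ _ (hov a) (Hpos a) Hcover) as [t [[s [Hs ->]] Ht]].
      apply (Hcov s (box_meet c (cylinder a s)) Hs).
      * intros i. apply meet_lb_l.
      * unfold box_meet. rewrite cylinder_at. apply meet_lb_r.
      * intros i. unfold box_meet. destruct (hI a i) as [<-|Hne].
        -- rewrite cylinder_at. exact Ht.
        -- rewrite (cylinder_off _ _ _ Hne), meet_top. apply Hpos.
  - intros x Tx _. eauto.
Qed.

Hypothesis hpos : forall a, positive_locale (X a).

Section BasicOpens.
Context (P : Frame) (iota : forall a, X a -> P).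
Hypothesis Hiota : forall a, frame_hom (X a) P (iota a).
Local Open Scope list_scope.

Fixpoint basic (l : list {a : I & X a}) : P :=
  match l with
  | nil => top
  | existT _ a s :: l' => meet (iota a s) (basic l')
  end.

Fixpoint coordinates (l : list {a : I & X a}) : box :=
  match l with
  | nil => fun _ => top
  | existT _ a s :: l' => box_meet (cylinder a s) (coordinates l')
  end.

Definition positive_basic (v : P) : Prop :=
  exists l, v = basic l /\ forall a, positive_elt (coordinates l a).

Lemma positive_basic_top : positive_basic top.
Proof. exists nil. split; [reflexivity|intros a; exact (hpos a)]. Qed.

Lemma coordinates_cons_positive (a : I) (r : X a) (l : list {a : I & X a}) :
  le r (coordinates l a) -> positive_elt r -> (forall i, positive_elt (coordinates l i)) ->
  forall i, positive_elt (coordinates (existT _ a r :: l) i).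
Proof.
  intros Hr Hp Hl i. simpl. unfold box_meet. destruct (hI a i) as [<-|Hne].
  - rewrite cylinder_at, (meet_eq_l _ _ Hr). exact Hp.
  - rewrite (cylinder_off _ _ _ Hne), top_meet. apply Hl.
Qed.

Lemma coordinates_in_image (h : P -> CoverageFrame) :
  frame_hom P CoverageFrame h -> (forall a x, h (iota a x) = gen a x) ->
  forall l, proj1_sig (h (basic l)) (coordinates l).
Proof.
  intros [Ht [Hm _]] Hhi l. induction l as [|[a s] l IH]; simpl.
  - rewrite Ht. simpl. trivial.
  - rewrite Hm. simpl. split.
    + rewrite Hhi. apply closure_incl. unfold box_meet. rewrite cylinder_at. apply meet_lb_l.
    + apply (proj1 (proj2_sig (h (basic l))) _ (coordinates l)); [|exact IH].
      intros i. apply meet_lb_r.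
Qed.

Lemma positive_basic_positive (hP : is_frame_coproduct X P iota) (v : P) :
  positive_basic v -> positive_elt v.
Proof.
  intros [l [-> Hl]] S HS.
  destruct (proj1 (proj2 hP CoverageFrame gen gen_hom)) as [h [Hh Hhi]].
  pose proof (hom_mono h Hh _ _ HS) as Hle.
  rewrite (proj2 (proj2 Hh)) in Hle.
  destruct (closure_positive _ _ Hl (Hle _ (coordinates_in_image h Hh Hhi l)))
    as [t [D [[s [Hs _]] _]]].
  eauto.
Qed.

Lemma basic_le_coordinate (l : list {a : I & X a}) (a : I) :
  le (basic l) (iota a (coordinates l a)).
Proof.
  induction l as [|[b s] l IH]; simpl.
  - rewrite (proj1 (Hiota a)). apply le_refl.
  - unfold box_meet. rewrite (proj1 (proj2 (Hiota a))). apply meet_mono; [|exact IH].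
    destruct (hI b a) as [<-|Hne].
    + rewrite cylinder_at. apply le_refl.
    + rewrite (cylinder_off _ _ _ Hne), (proj1 (Hiota a)). apply top_spec.
Qed.

(* Meeting a positive basic open with a generator: refine the a-th coordinate
   by the positive opens below it, using overtness of X_a. *)
Lemma positive_basic_meet_iota (z : P) (a : I) (p : X a) :
  positive_basic z -> covered positive_basic (meet z (iota a p)).
Proof.
  intros [l [-> Hl]].
  set (R := fun r : X a => le r (meet (coordinates l a) p) /\ positive_elt r).
  apply (covered_cover _ _ (fun x => exists w, img (iota a) R w /\ x = meet (basic l) w)).
  - rewrite <- distrib. apply meet_glb; [apply meet_lb_l|].
    eapply le_trans; [|apply (hom_positive_cover (iota a) (hov a) (Hiota a))].
    rewrite (proj1 (proj2 (Hiota a))).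
    apply meet_mono; [apply basic_le_coordinate|apply le_refl].
  - intros x [w [[r [[Hr Hr_pos] ->]] ->]]. split.
    + apply covered_of_G. exists (existT _ a r :: l). split; [simpl; apply meet_comm|].
      apply coordinates_cons_positive; [|exact Hr_pos|exact Hl].
      eapply le_trans; [exact Hr|apply meet_lb_l].
    + apply meet_mono; [apply le_refl|]. apply (hom_mono _ (Hiota a)).
      eapply le_trans; [exact Hr|apply meet_lb_r].
Qed.

Lemma positive_basic_meet (z w : P) :
  positive_basic z -> positive_basic w -> covered positive_basic (meet z w).
Proof.
  intros Hz [m [-> _]]. revert z Hz.
  induction m as [|[a p] m IH]; intros z Hz; simpl.
  - rewrite meet_top. apply covered_of_G, Hz.
  - rewrite meet_assoc. apply covered_meet_l.
    + apply positive_basic_meet_iota, Hz.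
    + intros z' Hz' _. apply IH, Hz'.
Qed.

Lemma iota_covered (a : I) (x : X a) : covered positive_basic (iota a x).
Proof.
  apply (covered_cover _ _ _ (hom_positive_cover (iota a) (hov a) (Hiota a) x)).
  intros z [r [[Hr Hr_pos] ->]]. split.
  - apply covered_of_G. exists (existT _ a r :: nil).
    split; [simpl; symmetry; apply meet_top|].
    apply coordinates_cons_positive; [exact (top_spec _ r)|exact Hr_pos|intros i; exact (hpos i)].
  - apply (hom_mono _ (Hiota a)), Hr.
Qed.

Lemma product_covered (hP : is_frame_coproduct X P iota) (y : P) :
  covered positive_basic y.
Proof.
  apply (coproduct_generated X P iota hP).
  - apply covered_subframe; [exact positive_basic_top|exact positive_basic_meet].
  - exact iota_covered.
Qed.

End BasicOpens.
End Product.

Theorem mainTheorem4 (I : Type) (X : I -> Frame) (P : Frame)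
  (iota : forall alpha, X alpha -> P)
  (hI : dec_eq I)
  (hpos : forall alpha, positive_locale (X alpha))
  (hovert : forall alpha, overt (X alpha))
  (hP : is_frame_coproduct X P iota) :
  positive_locale P /\ overt P.
Proof.
  assert (hov : forall a, locally_positive (X a)).
  { intros a. apply overt_locally_positive, hovert. }
  assert (basic_positive : forall v, positive_basic X P iota v -> positive_elt v).
  { exact (positive_basic_positive X hI hov P iota hP). }
  split.
  - apply basic_positive, (positive_basic_top X hpos P iota).
  - apply locally_positive_overt. intros u.
    apply (covered_mono _ _ u basic_positive).
    exact (product_covered X hI hov hpos P iota (proj1 hP) hP u).
Qed.
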